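(* In the standing setup, let $S,T\in\mathfrak{S}$ and let $1\le i<j\le k$ with $i\in\mathcal{N}_{(S,\cdot)}$ and $j\in\mathcal{N}_{(\cdot,T)}$. Then there are no configurations $\delta_i$ appearing on $\rho^i_{\mathrm{cap}}$ and $\delta_j$ appearing on $\rho^j_{\mathrm{cap}}$ such that $\delta_i$ and $\delta_j$ have the same state and the difference of their counter values is divisible by $\gcd(\mathrm{eff}(\sigma^+_S),-\mathrm{eff}(\sigma^-_T))$.
   Context: $\mathbb{N}=\{0,1,2,\dots\}$. A one-counter system (OCS) $\mathcal{O}$ consists of a finite set $Q$ of states, a set $T_{>0}\subseteq Q\times\{-1,0,1\}\times Q$ of non-zero transitions and a set $T_{=0}\subseteq Q\times\{0,1\}\times Q$ of zero tests. A configuration is a pair $(q,c)\in Q\times\mathbb{N}$ (state $q$, counter value $c$). A transition $t=(p,d,q)$ has source $p$, target $q$, effect $d$; it can be fired in $(p,c)$ if either $t\in T_{>0}$ and $c>0$, or $t\in T_{=0}$ and $c=0$, yielding $(q,c+d)$. A path is a sequence $(\gamma_1,t_1)\cdots(\gamma_m,t_m)$ such that, with some $\gamma_{m+1}$, firing $t_i$ in $\gamma_i$ yields $\gamma_{i+1}$ for all $i\le m$; its source is $\gamma_1$, target $\gamma_{m+1}$, length $\mathrm{len}=m$, configurations appearing on it are $\gamma_1,\dots,\gamma_{m+1}$, intermediate ones are $\gamma_2,\dots,\gamma_m$; its projection is $\mathrm{proj}=t_1\cdots t_m$ and its effect $\mathrm{eff}$ is the sum of the effects of its transitions. A sequence of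 transitions is consistent if each transition's target is the next one's source. A cycle is a consistent sequence of non-zero transitions starting and ending in the same state (its base state); positive/negative if its effect is positive/negative; simple if no state is visited twice except the base at start and end. The transition multigraph $G$ has vertices $Q$ and an edge $p\to q$ labelled $d$ for each $(p,d,q)\in T_{>0}$; $\mathfrak{S}$ is the set of its SCCs and $n_S$ the number of states in $S\in\mathfrak{S}$. A cycle is contained in $S$ if all its states lie in $S$; $S$ is positively (negatively) enabled if it contains a positive (negative) cycle. For every positively enabled $S$ a simple positive cycle $\sigma^+_S$ contained in $S$ is fixed, and for every negatively enabled $T$ a simple negative cycle $\sigma^-_T$ contained in $T$. An arc is a path whose source and target have counter value $0$ and whose intermediate configurations have positive counter value. A path is low if all configurations appearing on it have counter value $<5n$, where $n=|Q|$. For $S,T\in\mathfrak{S}$, an arc $\rho$ is $(S,T)$-normal if $\rho=\rho_{\mathrm{pref}}\rho_{\mathrm{up}}\rho_{\mathrm{cap}}\rho_{\mathrm{down}}\rho_{\mathrm{suff}}$ (normal decomposition) with $\rho_{\mathrm{pref}},\rho_{\mathrm{suff}}$ low, $\mathrm{proj}(\rho_{\mathrm{up}})=(\sigma^+_S)^a$, $\mathrm{proj}(\rho_{\mathrm{down}})=(\sigma^-_T)^b$ for some $a,b\in\mathbb{N}$, the source of $\rho_{\mathrm{cap}}$ having the base state of $\sigma^+_S$ and its target the base state of $\sigma^-_T$. Writing $A=\mathrm{eff}(\sigma^+_S)$, $B=-\mathrm{eff}(\sigma^-_T)$, such a decomposition is good if: (iii) $aA\le 2\,\mathrm{len}(\rho_{\mathrm{cap}})+2\,\mathrm{lcm}(A,B)$;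 (iv) $bB\le 2\,\mathrm{len}(\rho_{\mathrm{cap}})+2\,\mathrm{lcm}(A,B)$; (v) no infix of $\mathrm{proj}(\rho_{\mathrm{cap}})$ is a cycle with effect divisible by $\gcd(A,B)$; (vi) the target of $\rho_{\mathrm{up}}$ and the source of $\rho_{\mathrm{down}}$ have counter values $>n$; (vii) all configurations appearing on $\rho_{\mathrm{pref}}$ and $\rho_{\mathrm{suff}}$ together are pairwise distinct. Standing setup: $\alpha,\beta$ are configurations with counter value $0$; $\rho=\rho^1\rho^2\cdots\rho^k$ is a path from $\alpha$ to $\beta$ that has the minimum possible number of appearing configurations with counter value $0$ among all paths from $\alpha$ to $\beta$; each $\rho^i$ is an arc; $\{1,\dots,k\}=\mathcal{L}\sqcup\mathcal{N}$ where for $i\in\mathcal{L}$, $\rho^i$ is a low arc of minimum length among all low arcs with the same source and target, and for $i\in\mathcal{N}$, $\rho^i$ is $(S_i,T_i)$-normal for some $S_i,T_i\in\mathfrak{S}$ with a fixed good normal decomposition $\rho^i=\rho^i_{\mathrm{pref}}\rho^i_{\mathrm{up}}\rho^i_{\mathrm{cap}}\rho^i_{\mathrm{down}}\rho^i_{\mathrm{suff}}$. For $S,T\in\mathfrak{S}$: $\mathcal{N}_{(S,T)}=\{i\in\mathcal{N}: (S_i,T_i)=(S,T)\}$, $\mathcal{N}_{(S,\cdot)}=\{i\in\mathcal{N}:S_i=S\}$, $\mathcal{N}_{(\cdot,T)}=\{i\in\mathcal{N}:T_i=T\}$. *)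

From HB Require Import structures.
From mathcomp Require Import all_boot all_order all_algebra.
Set Implicit Arguments. Unset Strict Implicit. Unset Printing Implicit Defensive.
Import Order.TTheory GRing.Theory Num.Theory.

Section OCS.
Variable Q : finType.

Definition trans := (Q * int * Q)%type.
Definition conf := (Q * nat)%type.
Definition tsrc (t : trans) : Q := t.1.1.
Definition teff (t : trans) : int := t.1.2.
Definition ttgt (t : trans) : Q := t.2.

(* An OCS over the finite state set Q: non-zero transitions T_{>0} with
   effects in {-1,0,1} and zero tests T_{=0} with effects in {0,1}. *)
Record ocs := Ocs {
  Tpos : pred trans;
  Tzero : pred trans;
  Tpos_eff : forall t, Tpos t -> teff t \in [:: (-1)%R; 0%R; 1%R];
  Tzero_eff : forall t, Tzero t -> teff t \in [:: 0%R; 1%R] }.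

Variable O : ocs.

Definition fireable (g : conf) (t : trans) : bool :=
  (tsrc t == g.1) &&
  ((Tpos O t && (0 < g.2)%N) || (Tzero O t && (g.2 == 0%N))).

(* the configuration obtained by firing t in g (meaningful when fireable) *)
Definition step (g : conf) (t : trans) : conf :=
  (ttgt t, `|(Posz g.2 + teff t)%R|%N).

(* A path is given by its source configuration and its projection
   (sequence of transitions); its configurations are then determined. *)
Definition opath := (conf * seq trans)%type.

Fixpoint valid_from (g : conf) (ts : seq trans) : bool :=
  if ts is t :: ts' then fireable g t && valid_from (step g t) ts' else true.

Definition valid (p : opath) : bool := valid_from p.1 p.2.
Definition psrc (p : opath) : conf := p.1.
Definition ptgt (p : opath) : conf := foldl step p.1 p.2.
Definition plen (p : opath) : nat := size p.2.
Definition proj (p : opath) : seq trans := p.2.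
Definition pconfs (p : opath) : seq conf := p.1 :: scanl step p.1 p.2.
(* intermediate configurations: gamma_2, ..., gamma_m *)
Definition pinter (p : opath) : seq conf := take (plen p).-1 (behead (pconfs p)).
Definition seff (ts : seq trans) : int := (\sum_(t <- ts) teff t)%R.
Definition peff (p : opath) : int := seff p.2.

Fixpoint consistent (ts : seq trans) : bool :=
  match ts with
  | t :: ((t' :: _) as ts') => (ttgt t == tsrc t') && consistent ts'
  | _ => true
  end.

Definition is_cycle (c : seq trans) : bool :=
  if c is t0 :: _ then
    all (Tpos O) c && consistent c && (ttgt (last t0 c) == tsrc t0)
  else false.

Definition has_base (c : seq trans) (q : Q) : bool :=
  if c is t0 :: _ then tsrc t0 == q else false.

Definition simple_cycle (c : seq trans) : bool :=
  is_cycle c && uniq (map tsrc c).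

Definition contained (c : seq trans) (S : {set Q}) : bool :=
  all (fun t => (tsrc t \in S) && (ttgt t \in S)) c.

Definition gedge : rel Q :=
  fun p q => has (fun d => Tpos O (p, d, q)) [:: (-1)%R; 0%R; 1%R].

Definition is_scc (S : {set Q}) : Prop :=
  exists p, S = [set q | connect gedge p q && connect gedge q p].

Definition pos_enabled (S : {set Q}) : Prop :=
  exists c, [&& is_cycle c, contained c S & (0 < seff c)%R].
Definition neg_enabled (S : {set Q}) : Prop :=
  exists c, [&& is_cycle c, contained c S & (seff c < 0)%R].

Definition sigma_ok (sigp sign : {set Q} -> seq trans) : Prop :=
  (forall S, is_scc S -> pos_enabled S ->
     [&& simple_cycle (sigp S), contained (sigp S) S & (0 < seff (sigp S))%R]) /\
  (forall T, is_scc T -> neg_enabled T ->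
     [&& simple_cycle (sign T), contained (sign T) T & (seff (sign T) < 0)%R]).

Definition is_arc (p : opath) : bool :=
  [&& valid p, (psrc p).2 == 0%N, (ptgt p).2 == 0%N &
      all (fun g : conf => (0 < g.2)%N) (pinter p)].

Definition is_low (p : opath) : bool :=
  all (fun g : conf => (g.2 < 5 * #|Q|)%N) (pconfs p).

Definition nzero (p : opath) : nat := count (fun g : conf => g.2 == 0%N) (pconfs p).

Record ndec := NDec { dpref : opath; dup : opath; dcap : opath;
                      ddown : opath; dsuff : opath }.

Definition is_ndec (rho : opath) (d : ndec) : Prop :=
  [/\ psrc (dpref d) = psrc rho,
      psrc (dup d) = ptgt (dpref d),
      psrc (dcap d) = ptgt (dup d),
      psrc (ddown d) = ptgt (dcap d) &
      psrc (dsuff d) = ptgt (ddown d)] /\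
      proj rho = proj (dpref d) ++ proj (dup d) ++ proj (dcap d)
                 ++ proj (ddown d) ++ proj (dsuff d).

Definition good_normal (sigp sign : {set Q} -> seq trans) (S T : {set Q})
    (rho : opath) (d : ndec) : Prop :=
  let A := `|seff (sigp S)|%N in
  let B := `|seff (sign T)|%N in
  let n := #|Q| in
  [/\ is_scc S, is_scc T, pos_enabled S & neg_enabled T] /\
  [/\ is_ndec rho d, is_low (dpref d) & is_low (dsuff d)] /\
  exists a b : nat,
  [/\ proj (dup d) = flatten (nseq a (sigp S)),
      proj (ddown d) = flatten (nseq b (sign T)),
      has_base (sigp S) (psrc (dcap d)).1,
      has_base (sign T) (ptgt (dcap d)).1 &
  [/\ (a * A <= 2 * plen (dcap d) + 2 * lcmn A B)%N,
      (b * B <= 2 * plen (dcap d) + 2 * lcmn A B)%N,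
      (forall c, infix c (proj (dcap d)) -> is_cycle c ->
          ~~ (gcdn A B %| `|seff c|)%N),
      (n < (ptgt (dup d)).2)%N /\ (n < (psrc (ddown d)).2)%N &
      uniq (pconfs (dpref d) ++ pconfs (dsuff d))]].

Definition full_path (alpha : conf) (k : nat) (rho : nat -> opath) : opath :=
  (alpha, flatten [seq proj (rho i) | i <- iota 1 k]).

Definition standing_setup (sigp sign : {set Q} -> seq trans)
    (alpha beta : conf) (k : nat) (rho : nat -> opath) (inN : nat -> bool)
    (Sof Tof : nat -> {set Q}) (dec : nat -> ndec) : Prop :=
  [/\ sigma_ok sigp sign, alpha.2 = 0%N & beta.2 = 0%N] /\
  [/\ (forall i, (1 <= i <= k)%N -> is_arc (rho i) /\
          psrc (rho i) = (if i == 1%N then alpha else ptgt (rho i.-1))),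
      ptgt (full_path alpha k rho) = beta &
  [/\ forall p : opath, valid p -> psrc p = alpha -> ptgt p = beta ->
        (nzero (full_path alpha k rho) <= nzero p)%N,
      forall i, (1 <= i <= k)%N -> ~~ inN i ->
        is_low (rho i) /\
        (forall p : opath, is_arc p -> is_low p -> psrc p = psrc (rho i) ->
            ptgt p = ptgt (rho i) -> (plen (rho i) <= plen p)%N) &
      forall i, (1 <= i <= k)%N -> inN i ->
        good_normal sigp sign (Sof i) (Tof i) (rho i) (dec i)]].

End OCS.

From mathcomp Require Import all_boot all_order all_algebra zify.
Set Implicit Arguments. Unset Strict Implicit. Unset Printing Implicit Defensive.
Import GRing.Theory Num.Theory.

(* Suppose such configurations d_i and d_j exist, with counters u and v, and
   write A = eff(sigma+_S), B = -eff(sigma-_T). By Bezout, u + x A = v + y B for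
   some naturals x, y. Starting at the source of the cap of rho^i (counter > n),
   run sigma+_S x times, then the cap of rho^i up to d_i and the cap of rho^j
   from d_j on, both lifted by x A = v - u + y B, and finally sigma-_T y times,
   which brings the counter back down to the target of the cap of rho^j
   (counter > n). Every configuration of this run is positive, so splicing it
   into rho in place of the segment between the two caps removes the zero at
   the end of rho^i, contradicting the minimality of the zeros on rho. *)

Arguments step {Q} g t : simpl never.

Section Runs.
Variable Q : finType.
Variable O : ocs Q.

Definition pos_run (p : opath Q) : bool :=
  valid O p && all (fun c : conf Q => (0 < c.2)%N) (pconfs p).

Definition nzero_steps (g : conf Q) (ts : seq (trans Q)) : nat :=
  count (fun c : conf Q => c.2 == 0%N) (scanl step g ts).

Lemma valid_from_cat g s1 s2 :
  valid_from O g (s1 ++ s2) = valid_from O g s1 && valid_from O (foldl step g s1) s2.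
Proof. by elim: s1 g => [|t s IH] g //=; rewrite IH andbA. Qed.

Lemma nzero_steps_cat g s1 s2 :
  nzero_steps g (s1 ++ s2) = nzero_steps g s1 + nzero_steps (foldl step g s1) s2.
Proof. by rewrite /nzero_steps scanl_cat count_cat. Qed.

Lemma nzero_steps_cons g t ts :
  nzero_steps g (t :: ts) = ((step g t).2 == 0%N) + nzero_steps (step g t) ts.
Proof. by []. Qed.

Lemma pos_run_nil g : pos_run (g, [::]) = (0 < g.2)%N.
Proof. by rewrite /pos_run /= andbT. Qed.

Lemma pos_run_cons g t ts :
  pos_run (g, t :: ts) = [&& fireable O g t, (0 < g.2)%N & pos_run (step g t, ts)].
Proof.
rewrite /pos_run /valid /=.
by case: (fireable O g t); case: (0 < g.2)%N; case: valid_from.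
Qed.

Lemma pos_run_src_gt0 g ts : pos_run (g, ts) -> (0 < g.2)%N.
Proof. by case/andP=> _ /andP[]. Qed.

Lemma pos_run_cat g s1 s2 :
  pos_run (g, s1 ++ s2) = pos_run (g, s1) && pos_run (foldl step g s1, s2).
Proof.
elim: s1 g => [|t s IH] g /=; last by rewrite !pos_run_cons IH !andbA.
rewrite pos_run_nil; case H: (pos_run (g, s2)); last by rewrite andbF.
by rewrite (pos_run_src_gt0 H).
Qed.

Lemma pos_run_valid p : pos_run p -> valid O p.
Proof. by case/andP. Qed.

Lemma pos_run_nzero_steps g ts : pos_run (g, ts) -> nzero_steps g ts = 0%N.
Proof.
elim: ts g => [|t s IH] g //; rewrite pos_run_cons => /and3P[_ _ H].
by rewrite nzero_steps_cons IH // addn0; have := pos_run_src_gt0 H; case: (_.2).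
Qed.

Lemma nzero_steps_gt0 g ts :
  (foldl step g ts).2 = 0%N -> g.2 != 0%N -> (0 < nzero_steps g ts)%N.
Proof.
elim: ts g => [|t s IH] g /=; first by move=> ->.
move=> Hend Hg; rewrite nzero_steps_cons.
case: eqP => [//|/eqP Hst].
exact: IH Hend Hst.
Qed.

Lemma step_Tpos g t : Tpos O t -> (0 < g.2)%N ->
  Posz (step g t).2 = (Posz g.2 + teff t)%R.
Proof.
by move=> /Tpos_eff; rewrite !inE => /or3P [] /eqP E Hg; rewrite /step /= E; lia.
Qed.

Lemma fireable_Tpos g t : fireable O g t -> (0 < g.2)%N ->
  (tsrc t == g.1) && Tpos O t.
Proof.
by rewrite /fireable => /andP[-> /orP[/andP[-> _]|/andP[_ /eqP ->]]].
Qed.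

Lemma step_shift g t K : Tpos O t -> (0 < g.2)%N ->
  step (g.1, g.2 + K)%N t = ((step g t).1, (step g t).2 + K)%N.
Proof.
move=> /Tpos_eff; rewrite !inE => /or3P [] /eqP E Hg;
by rewrite /step /= E; congr pair; lia.
Qed.

(* Away from zero only non-zero transitions fire, so a positive run can be
   replayed with its counter raised by any constant. *)
Lemma pos_run_shift g ts K : pos_run (g, ts) ->
  pos_run ((g.1, g.2 + K)%N, ts) /\
  foldl step (g.1, g.2 + K)%N ts = ((foldl step g ts).1, (foldl step g ts).2 + K)%N.
Proof.
elim: ts g => [|t s IH] g; first by rewrite !pos_run_nil /= => H; split=> //; lia.
rewrite !pos_run_cons => /and3P[Hf Hg Hs]; have /andP[Hsrc Ht] := fireable_Tpos Hf Hg.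
have [IH1 IH2] := IH _ Hs; have HgK : (0 < g.2 + K)%N by lia.
rewrite /= step_shift // IH1 IH2 HgK andbT; split=> //.
by rewrite /fireable /= Ht HgK (eqP Hsrc) eqxx.
Qed.

Lemma Tpos_pos_run ts g : consistent ts -> all (Tpos O) ts ->
  (if ts is t :: _ then tsrc t == g.1 else true) -> (size ts < g.2)%N ->
  [/\ pos_run (g, ts), Posz (foldl step g ts).2 = (Posz g.2 + seff ts)%R &
      (foldl step g ts).1 = last g.1 (map (@ttgt Q) ts)].
Proof.
elim: ts g => [|t s IH] g Hc Ha Hh Hsz.
  by rewrite pos_run_nil /seff big_nil addr0; split=> //; lia.
have [Hc' Hh'] : consistent s /\
    is_true (if s is t' :: _ then tsrc t' == (step g t).1 else true).
  by case: s {IH Ha Hsz} Hc => //= t' s' /andP[/eqP -> ->].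
move: Ha => /= /andP[Ht Ha]; have Hg : (0 < g.2)%N by move: Hsz => /=; lia.
have Hst := step_Tpos Ht Hg.
have Hsz' : (size s < (step g t).2)%N.
  by move: Hsz Hst (Tpos_eff Ht); rewrite !inE => /= ? ? /or3P [] /eqP ->; lia.
have [IH1 IH2 IH3] := IH _ Hc' Ha Hh' Hsz'.
split=> //; first by rewrite pos_run_cons IH1 Hg /fireable Hh Ht Hg.
by rewrite IH2 Hst /seff big_cons -/(seff s); lia.
Qed.

Definition pumping_cycle (c : seq (trans Q)) (q : Q) : bool :=
  [&& is_cycle O c, has_base c q & (size c <= #|Q|)%N].

Lemma simple_cycle_size c : simple_cycle O c -> (size c <= #|Q|)%N.
Proof.
by case/andP=> _ /card_uniqP E; rewrite -(size_map (@tsrc Q)) -E max_card.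
Qed.

Lemma pumping_cycle_run c q v : pumping_cycle c q -> (#|Q| < v)%N ->
  pos_run ((q, v), c) /\ foldl step (q, v) c = (q, `|(Posz v + seff c)%R|%N).
Proof.
case: c => [|t0 c] /and3P[] //= /andP[/andP[Ha Hc] /eqP Hl] /eqP Hb Hsz Hv.
have [] := @Tpos_pos_run (t0 :: c) (q, v) Hc Ha; rewrite /= ?Hb //; first lia.
move=> Hrun E1 E2; split=> //.
by rewrite [LHS]surjective_pairing E2 last_map -E1 Hl Hb.
Qed.

Lemma pumping_cycle_up c q x v : pumping_cycle c q -> (0 < seff c)%R ->
  (#|Q| < v)%N ->
  pos_run ((q, v), flatten (nseq x c)) /\
  foldl step (q, v) (flatten (nseq x c)) = (q, v + x * `|seff c|)%N.
Proof.
move=> Hc Hpos; elim: x v => [|x IH] v Hv.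
  by rewrite pos_run_nil /= addn0; split=> //; lia.
have [H1 H2] := pumping_cycle_run Hc Hv.
have {}H2 : foldl step (q, v) c = (q, v + `|seff c|)%N by rewrite H2; congr pair; lia.
have [IH1 IH2] := IH (v + `|seff c|)%N ltac:(lia).
rewrite /= pos_run_cat foldl_cat H1 H2 IH1 IH2; split=> //; congr pair; lia.
Qed.

Lemma pumping_cycle_down c q y v : pumping_cycle c q -> (seff c < 0)%R ->
  (#|Q| < v)%N ->
  pos_run ((q, v + y * `|seff c|)%N, flatten (nseq y c)) /\
  foldl step (q, v + y * `|seff c|)%N (flatten (nseq y c)) = (q, v).
Proof.
move=> Hc Hneg Hv; elim: y => [|y IH].
  by rewrite mul0n addn0 pos_run_nil /=; split=> //; lia.
have [H1 H2] := @pumping_cycle_run c q (v + y.+1 * `|seff c|)%N Hc ltac:(lia).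
have {}H2 : foldl step (q, v + y.+1 * `|seff c|)%N c = (q, v + y * `|seff c|)%N.
  by rewrite H2; congr pair; lia.
by case: IH => IH1 IH2; rewrite /= pos_run_cat foldl_cat H1 H2 IH1 IH2.
Qed.

Lemma pos_run_split g ts d : pos_run (g, ts) -> d \in pconfs (g, ts) ->
  exists m, [/\ pos_run (g, take m ts), foldl step g (take m ts) = d,
                pos_run (d, drop m ts) & foldl step d (drop m ts) = foldl step g ts].
Proof.
move=> Hrun /(nthP g) [m Hm Hd]; exists m.
have Ed : foldl step g (take m ts) = d.
  by rewrite -Hd nth_cons_scanl //; move: Hm; rewrite /= size_scanl.
move: Hrun; rewrite -{1}(cat_take_drop m ts) pos_run_cat Ed => /andP[H1 H2].
by split=> //; rewrite -Ed -foldl_cat cat_take_drop.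
Qed.

(* The run is c1^x, then p1 up to d1 and p2 from d2 on, both lifted by the
   counter offset that c1^x adds and c2^y removes, then c2^y. *)
Lemma pos_run_bridge c1 c2 (p1 p2 : opath Q) d1 d2 x y :
  pumping_cycle c1 (psrc p1).1 -> (0 < seff c1)%R -> (#|Q| < (psrc p1).2)%N ->
  pumping_cycle c2 (ptgt p2).1 -> (seff c2 < 0)%R -> (#|Q| < (ptgt p2).2)%N ->
  pos_run p1 -> pos_run p2 -> d1 \in pconfs p1 -> d2 \in pconfs p2 ->
  d1.1 = d2.1 -> (d1.2 + x * `|seff c1| = d2.2 + y * `|seff c2|)%N ->
  exists W, pos_run (psrc p1, W) /\ foldl step (psrc p1) W = ptgt p2.
Proof.
case: p1 p2 => [g1 s1] [g2 s2]; rewrite /psrc /ptgt /=.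
move=> Hc1 Hpos Hv1 Hc2 Hneg Hv2 R1 R2 D1 D2 Hst Hxy.
have [m1 [Rpre Epre _ _]] := pos_run_split R1 D1.
have [m2 [_ _ Rsuf Esuf]] := pos_run_split R2 D2.
have [Rup Eup] := pumping_cycle_up x Hc1 Hpos Hv1.
have [Rpre' Epre'] := pos_run_shift (x * `|seff c1|) Rpre.
have [Rsuf' Esuf'] := pos_run_shift (y * `|seff c2|) Rsuf.
have [Rdown Edown] := pumping_cycle_down y Hc2 Hneg Hv2.
rewrite -surjective_pairing in Rup Eup.
rewrite Epre Hst Hxy in Epre'; rewrite Esuf in Esuf'.
rewrite -surjective_pairing in Edown.
exists (flatten (nseq x c1) ++ take m1 s1 ++ drop m2 s2 ++ flatten (nseq y c2)).
rewrite !pos_run_cat !foldl_cat Eup Epre' Esuf' Edown Rup Rpre' Rdown /=.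
by rewrite Rsuf'.
Qed.

Lemma arc_pos_run_infix (p : opath Q) s1 s2 s3 : is_arc O p ->
  proj p = s1 ++ s2 ++ s3 -> (0 < (foldl step (psrc p) s1).2)%N ->
  (0 < (foldl step (psrc p) (s1 ++ s2)).2)%N ->
  pos_run (foldl step (psrc p) s1, s2).
Proof.
case: p => g ts; rewrite /is_arc /proj /psrc /= => /and4P [Hv _ _ Hint] Hts H1 H2.
subst ts.
apply/andP; split.
  by move: Hv; rewrite /valid /= !valid_from_cat => /andP[_ /andP[]].
case/lastP: s2 H2 Hint Hv => [|s2 t] H2 Hint Hv; first by rewrite /= H1.
rewrite /pconfs /= scanl_rcons all_rcons H1 /=.
rewrite foldl_cat in H2; rewrite H2 /=.
apply/allP => c Hc; move/allP: Hint; apply.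
rewrite /pinter /plen /pconfs /= cat_rcons scanl_cat scanl_cat catA.
rewrite take_cat ifN; last by rewrite size_cat !size_scanl !size_cat /=; lia.
rewrite mem_cat take_cat ifN; last by rewrite !size_scanl !size_cat /=; lia.
by rewrite mem_cat Hc orbT.
Qed.

Lemma nzeroE g ts : nzero (g, ts) = (g.2 == 0%N) + nzero_steps g ts.
Proof. by []. Qed.

(* Replacing a segment of a path by a positive run removes the zeros of the
   segment and adds none. *)
Lemma minimal_path_segment_zero_free alpha beta X Y Z g g' W :
  valid O (alpha, X ++ Y ++ Z) -> foldl step alpha (X ++ Y ++ Z) = beta ->
  (forall p : opath Q, valid O p -> psrc p = alpha -> ptgt p = beta ->
     (nzero (alpha, X ++ Y ++ Z) <= nzero p)%N) ->
  foldl step alpha X = g -> foldl step g Y = g' ->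
  pos_run (g, W) -> foldl step g W = g' -> nzero_steps g Y = 0%N.
Proof.
move=> Hv Hend Hmin EX EY RW EW.
move: Hv Hend; rewrite /valid /= !valid_from_cat !foldl_cat EX EY.
case/and3P=> VX _ VZ Hend.
have := Hmin (alpha, X ++ W ++ Z).
rewrite /valid /psrc /ptgt /= !valid_from_cat !foldl_cat EX EW VX VZ Hend.
rewrite (pos_run_valid RW : valid_from O g W) => /(_ isT erefl erefl).
by rewrite !nzeroE !nzero_steps_cat EX EY EW (pos_run_nzero_steps RW); lia.
Qed.

Definition arcs_proj (rho : nat -> opath Q) (a b : nat) : seq (trans Q) :=
  flatten [seq proj (rho l) | l <- iota a b].

Definition chained_arcs (alpha : conf Q) (k : nat) (rho : nat -> opath Q) : Prop :=
  forall i, (1 <= i <= k)%N -> is_arc O (rho i) /\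
    psrc (rho i) = (if i == 1%N then alpha else ptgt (rho i.-1)).

Lemma arcs_projD rho a b c :
  arcs_proj rho a (b + c) = arcs_proj rho a b ++ arcs_proj rho (a + b) c.
Proof. by rewrite /arcs_proj iotaD map_cat flatten_cat. Qed.

Lemma arcs_proj_last rho m : (0 < m)%N ->
  arcs_proj rho 1 m = arcs_proj rho 1 m.-1 ++ proj (rho m).
Proof.
case: m => // m _; rewrite -[m.+1]addn1 arcs_projD add1n addn1 /=.
by rewrite [arcs_proj _ _ 1]/arcs_proj /= cats0.
Qed.

Lemma arcs_proj_split rho a b : (a <= b)%N ->
  arcs_proj rho 1 b = arcs_proj rho 1 a ++ arcs_proj rho a.+1 (b - a).
Proof. by move=> Hab; rewrite -{1}(subnKC Hab) arcs_projD add1n. Qed.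

Lemma chained_arcs_run alpha k rho : chained_arcs alpha k rho ->
  forall m, (m <= k)%N -> valid_from O alpha (arcs_proj rho 1 m) /\
    foldl step alpha (arcs_proj rho 1 m) = if m == 0%N then alpha else ptgt (rho m).
Proof.
move=> Hch; elim=> [|m IH] Hm //; have [IH1 IH2] := IH (ltnW Hm).
have [/and4P[Ha _ _ _] Hs] := Hch m.+1 ltac:(lia).
have {}Hs : psrc (rho m.+1) = foldl step alpha (arcs_proj rho 1 m).
  by rewrite Hs IH2; case: m {IH IH1 IH2 Hm Hs Ha}.
by rewrite arcs_proj_last // valid_from_cat foldl_cat IH1 -Hs.
Qed.

Lemma chained_arcs_src alpha k rho m : chained_arcs alpha k rho ->
  (1 <= m <= k)%N -> foldl step alpha (arcs_proj rho 1 m.-1) = psrc (rho m).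
Proof.
move=> Hch Hm; have [_ ->] := chained_arcs_run Hch (m := m.-1) ltac:(lia).
by have [_ ->] := Hch m Hm; case: m Hm => [|[|m]].
Qed.

Lemma ndec_foldl (rho : opath Q) d : is_ndec rho d ->
  [/\ psrc (dcap d) = foldl step (psrc rho) (proj (dpref d) ++ proj (dup d)),
      ptgt (dcap d) =
        foldl step (psrc rho) (proj (dpref d) ++ proj (dup d) ++ proj (dcap d)) &
      ptgt rho =
        foldl step (psrc (dcap d)) (proj (dcap d) ++ proj (ddown d) ++ proj (dsuff d))].
Proof.
case: d => [[g1 s1] [g2 s2] [g3 s3] [g4 s4] [g5 s5]]; case: rho => g0 s0.
rewrite /is_ndec /psrc /ptgt /proj /= => [[[E1 E2 E3 E4 E5] Ep]].
by subst; rewrite !foldl_cat.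
Qed.

(* The segment from the start of the first cap to the end of the second passes
   through the target of the first arc, whose counter is zero. *)
Lemma full_path_through_caps alpha k rho i j di dj :
  chained_arcs alpha k rho -> (1 <= i)%N -> (i < j)%N -> (j <= k)%N ->
  is_ndec (rho i) di -> is_ndec (rho j) dj -> (0 < (psrc (dcap di)).2)%N ->
  exists X Y Z, [/\ full_path alpha k rho = (alpha, X ++ Y ++ Z),
    foldl step alpha X = psrc (dcap di),
    foldl step (psrc (dcap di)) Y = ptgt (dcap dj) &
    (0 < nzero_steps (psrc (dcap di)) Y)%N].
Proof.
move=> Hch Hi Hij Hjk Ndi Ndj Hcap.
have [Ei1 _ Ei3] := ndec_foldl Ndi; have [_ Ej2 _] := ndec_foldl Ndj.
case: (Ndi) => _ Epi; case: (Ndj) => _ Epj.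
have Hsi := @chained_arcs_src _ _ _ i Hch ltac:(lia).
have Hsj := @chained_arcs_src _ _ _ j Hch ltac:(lia).
have [/and4P[_ _ Hzero _] _] := Hch i ltac:(lia).
have Hpre_j : arcs_proj rho 1 j.-1 =
    arcs_proj rho 1 i.-1 ++ proj (rho i) ++ arcs_proj rho i.+1 (j.-1 - i).
  by rewrite (@arcs_proj_split rho i j.-1) ?(arcs_proj_last rho Hi) -?catA //; lia.
set Ri := proj (dcap di) ++ proj (ddown di) ++ proj (dsuff di).
set Mj := proj (dpref dj) ++ proj (dup dj) ++ proj (dcap dj).
exists (arcs_proj rho 1 i.-1 ++ proj (dpref di) ++ proj (dup di)),
       (Ri ++ arcs_proj rho i.+1 (j.-1 - i) ++ Mj),
       (proj (ddown dj) ++ proj (dsuff dj) ++ arcs_proj rho j.+1 (k - j)).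
have EX : foldl step alpha (arcs_proj rho 1 i.-1 ++ proj (dpref di) ++ proj (dup di)) =
    psrc (dcap di) by rewrite foldl_cat Hsi Ei1.
have EXY : foldl step alpha (arcs_proj rho 1 j.-1 ++ Mj) = ptgt (dcap dj).
  by rewrite foldl_cat Hsj Ej2.
rewrite Hpre_j Epi -!catA in EXY.
split=> //.
- have Hj : (0 < j)%N by lia.
  rewrite /full_path -/(arcs_proj rho 1 k) (arcs_proj_split rho Hjk).
  by rewrite (arcs_proj_last rho Hj) Hpre_j Epi Epj -!catA.
- by rewrite -EX -foldl_cat -!catA.
- rewrite nzero_steps_cat; apply: leq_trans (leq_addr _ _).
  by apply: nzero_steps_gt0; [rewrite -Ei3; apply/eqP | rewrite -lt0n].
Qed.

Section GoodNormal.
Variables (sigp sign : {set Q} -> seq (trans Q)) (S T : {set Q}).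
Variables (rho : opath Q) (d : ndec Q).
Hypothesis Hnormal : good_normal O sigp sign S T rho d.

Lemma good_normal_cap : is_arc O rho ->
  [/\ pos_run (dcap d), (#|Q| < (psrc (dcap d)).2)%N & (#|Q| < (ptgt (dcap d)).2)%N].
Proof.
move=> Harc; case: Hnormal => _ [[Nd _ _] [a [b [_ _ _ _ [_ _ _ [Hup Hdown] _]]]]].
have [E1 E2 _] := ndec_foldl Nd; case: (Nd) => [[_ _ Ecap Edown _] Ep].
rewrite -Ecap in Hup; rewrite Edown in Hdown; split=> //.
have := @arc_pos_run_infix rho (proj (dpref d) ++ proj (dup d)) (proj (dcap d))
  (proj (ddown d) ++ proj (dsuff d)) Harc.
rewrite -E1 -[(_ ++ _) ++ proj (dcap d)]catA -E2 [dcap d]surjective_pairing.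
apply; first by rewrite Ep !catA.
- exact: leq_ltn_trans (leq0n _) Hup.
- exact: leq_ltn_trans (leq0n _) Hdown.
Qed.

Lemma good_normal_pumping : sigma_ok O sigp sign ->
  [/\ pumping_cycle (sigp S) (psrc (dcap d)).1, (0 < seff (sigp S))%R,
      pumping_cycle (sign T) (ptgt (dcap d)).1 & (seff (sign T) < 0)%R].
Proof.
case: Hnormal => [[HS HT HposS HnegT] [_ [a [b [_ _ HbS HbT _]]]]] [Hsigp Hsign].
case/and3P: (Hsigp S HS HposS) => /[dup] /simple_cycle_size HszS /andP[HcS _] _ HeS.
case/and3P: (Hsign T HT HnegT) => /[dup] /simple_cycle_size HszT /andP[HcT _] _ HeT.
by rewrite /pumping_cycle HcS HcT HbS HbT HszS HszT.
Qed.

End GoodNormal.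

End Runs.

Lemma dvdn_gcdn_dist_bezout A B u v : (0 < A)%N -> (0 < B)%N ->
  (gcdn A B %| `|(Posz u - Posz v)%R|)%N -> exists x y, (u + x * A = v + y * B)%N.
Proof.
move=> HA HB; case: (leqP u v) => Huv.
  have -> : `|(Posz u - Posz v)%R|%N = (v - u)%N by lia.
  case/dvdnP=> m Hm; case: (egcdnP B HA) => km kn E _.
  by exists (km * m)%N, (kn * m)%N; nia.
have -> : `|(Posz u - Posz v)%R|%N = (u - v)%N by lia.
rewrite gcdnC; case/dvdnP=> m Hm; case: (egcdnP A HB) => km kn E _.
by exists (kn * m)%N, (km * m)%N; nia.
Qed.

Theorem lemma4 (Q : finType) (O : ocs Q) (sigp sign : {set Q} -> seq (trans Q))
    (alpha beta : conf Q) (k : nat) (rho : nat -> opath Q) (inN : nat -> bool)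
    (Sof Tof : nat -> {set Q}) (dec : nat -> ndec Q)
    (S T : {set Q}) (i j : nat) :
  standing_setup O sigp sign alpha beta k rho inN Sof Tof dec ->
  is_scc O S -> is_scc O T ->
  (1 <= i)%N -> (i < j)%N -> (j <= k)%N ->
  inN i -> Sof i = S -> inN j -> Tof j = T ->
  ~ (exists (di dj : conf Q),
       [/\ di \in pconfs (dcap (dec i)), dj \in pconfs (dcap (dec j)),
           di.1 = dj.1 &
           (gcdn `|seff (sigp S)| `|seff (sign T)| %| `|(Posz di.2 - Posz dj.2)%R|)%N]).
Proof.
move=> [[Hsig _ _] [Hch Hend [Hmin _ Hnorm]]] _ _ Hi Hij Hjk Ni <- Nj <-
  [d1 [d2 [Hd1 Hd2 Hst Hdvd]]].
have Gi := Hnorm i ltac:(lia) Ni; have Gj := Hnorm j ltac:(lia) Nj.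
have [_ [[Ndi _ _] _]] := Gi; have [_ [[Ndj _ _] _]] := Gj.
have [Ci Hci _] := good_normal_cap Gi (proj1 (Hch i ltac:(lia))).
have [Cj _ Hcj] := good_normal_cap Gj (proj1 (Hch j ltac:(lia))).
have [PS HposS _ _] := good_normal_pumping Gi Hsig.
have [_ _ PT HnegT] := good_normal_pumping Gj Hsig.
have HA : (0 < `|seff (sigp (Sof i))|)%N by lia.
have HB : (0 < `|seff (sign (Tof j))|)%N by lia.
have [x [y Hxy]] := dvdn_gcdn_dist_bezout HA HB Hdvd.
have [W [RW EW]] := pos_run_bridge PS HposS Hci PT HnegT Hcj Ci Cj Hd1 Hd2 Hst Hxy.
have [X [Y [Z [Efull EX EY HY]]]] :=
  full_path_through_caps Hch Hi Hij Hjk Ndi Ndj ltac:(lia).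
have Hv : valid O (full_path alpha k rho) := (chained_arcs_run Hch (leqnn k)).1.
rewrite Efull in Hv Hend Hmin.
by have := minimal_path_segment_zero_free Hv Hend Hmin EX EY RW EW; lia.
Qed.
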